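(* Let $\epsilon\le 1/10$ and consider the multi-value algorithm (with suitable constants $c_1,c_2,c_3>0$) against a late $\epsilon$-bounded adaptive blocking adversary. Then, with high probability, $\sigma_1=\Omega(\log n)$.
   Context: Model: $n$ anonymous nodes, fully interconnected, synchronous rounds; in each round every node first receives the non-blocked messages sent to it in the previous round, computes, then sends messages. Late $\epsilon$-bounded adaptive adversary: at the start of each round $t\ge2$ it knows the full system state at the beginning of round $t-1$ and blocks a set $B_t$ of at most $\epsilon n$ nodes in round $t$ (blocked nodes neither send nor receive in that round); in round 1 it knows the initial state but not that round's coin flips. W.h.p. means with probability at least $1-n^{-\Omega(1)}$. Multi-value algorithm (constants $c_1,c_2,c_3>0$; inputs from a domain of size polynomial in $n$; $\bot$ is a special value with $\bot\le x$ for all $x$): (1) every node $u$ initializes $x_u$ to its input and becomes active with probability $c_1\log n/n$, otherwise inactive; (2) each active node sends $x_u$ to $\lceil c_2\log n\rceil$ nodes chosen uniformly at random; (3) every inactive or blocked node $v$ sets $x_v=\bot$; (4) for iterations $t=1,\dots,\lceil c_3\log n\rceil$, every node $v$ sets $x_v=\max(R\cup\{x_v\})$ where $R$ is the set of newly received values, becomes active if $x_v\neq\bot$, and, if $t<c_3\log n$ and $v$ is active, sends $x_v$ to $2$ nodes chosen uniformly at random; (5) finally every node decides on $x_u$. Let $A$ be the set of nodes active in round 1 and $B_1$ the set of nodes blocked in round 1; $x^*$ is the maximum input value among nodes in $A\setminus B_1$; $\sigma_t$ is the number of nodes whose value is $x^*$ at the end of round (iteration) $t$. *)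

From HB Require Import structures.
From mathcomp Require Import all_boot all_order all_algebra.
From mathcomp Require Import all_classical all_reals all_analysis.
Set Implicit Arguments. Unset Strict Implicit. Unset Printing Implicit Defensive.
Import Order.TTheory GRing.Theory Num.Theory.
Local Open Scope ring_scope.

(* Values are option nat: None plays the role of the special value bot,
   with bot <= x for all x. *)
Definition omax (a b : option nat) : option nat :=
  match a, b with
  | None, _ => b
  | _, None => a
  | Some x, Some y => Some (maxn x y)
  end.

Definition p_act (R : realType) (c1 : R) (n : nat) : R :=
  Num.min 1 (c1 * ln (n%:R) / n%:R).

Definition fanout (R : realType) (c2 : R) (n : nat) : nat :=
  `|Num.ceil (c2 * ln (n%:R))|%N.

(* Random outcome of round 1: each node's activation coin, and for each node
   the list of m = fanout targets, each independently uniform in 'I_n. *)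
Definition outcome (n m : nat) : finType :=
  ({ffun 'I_n -> bool} * {ffun 'I_n -> {ffun 'I_m -> 'I_n}})%type.

Definition weight (R : realType) (p : R) (n m : nat) (w : outcome n m) : R :=
  (\prod_(u : 'I_n) (if w.1 u then p else 1 - p)) * (n%:R^-1) ^+ (n * m).

Definition prob (R : realType) (p : R) (n m : nat) (E : pred (outcome n m)) : R :=
  \sum_(w : outcome n m | E w) weight p w.

Section Exec.
Variables (n m : nat) (x : 'I_n -> nat) (B1 B2 : {set 'I_n}) (w : outcome n m).

(* u is in A \ B1 : active in round 1 and not blocked in round 1 *)
Definition live (u : 'I_n) : bool := w.1 u && (u \notin B1).

Definition val0 (v : 'I_n) : option nat := if live v then Some (x v) else None.

Definition xstar : option nat := \big[omax/None]_(u | live u) Some (x u).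

(* message from u reaches v in round 2 (iteration 1): u is live (sent in
   round 1), chose v as one of its targets, and v is not blocked in round 2 *)
Definition reaches (u v : 'I_n) : bool :=
  [&& live u, v \notin B2 & [exists j : 'I_m, w.2 u j == v]].

Definition val1 (v : 'I_n) : option nat :=
  \big[omax/val0 v]_(u | reaches u v) Some (x u).

Definition sigma1 : nat := #|[set v | (xstar != None) && (val1 v == xstar)]|.

End Exec.

From Pilot Require Import Defs.
From HB Require Import structures.
From mathcomp Require Import all_boot all_order all_algebra.
From mathcomp Require Import all_classical all_reals all_analysis.
From mathcomp Require Import lra.
Set Implicit Arguments. Unset Strict Implicit. Unset Printing Implicit Defensive.
Import Order.TTheory GRing.Theory Num.Theory.
Local Open Scope ring_scope.

(* Let u be the live node (active and unblocked in round 1) of largest input,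
   so that x^* = x u: every target of u that is not blocked in round 2 ends
   iteration 1 holding x^*, hence sigma_1 is at least the number of distinct
   targets of u outside B2.  Conditionally on the coins these targets are
   uniform, so with c1 = 4 and c2 = 10 only two things can go wrong, each with
   probability at most n^-3.  Either no node is live, which has probability
   (1 - p)^#unblocked <= exp(-3 log n); or the m = ceil(10 log n) targets of u
   hit fewer than log n distinct nodes outside B2, which Markov's inequality
   bounds by e^(2 log n) E[e^(-2 #fresh)] <= e^(2 log n) 2^-m, because
   |B2| + m <= n/4. *)

Lemma omaxA : associative omax.
Proof. by case=> [a|] [b|] [c|] //=; rewrite maxnA. Qed.

Lemma omaxC : commutative omax.
Proof. by case=> [a|] [b|] //=; rewrite maxnC. Qed.

Lemma omax0o : left_id None omax.
Proof. by case. Qed.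

HB.instance Definition _ :=
  Monoid.isComLaw.Build (option nat) None omax omaxA omaxC omax0o.

Definition ole (o : option nat) (b : nat) : bool :=
  if o is Some a then (a <= b)%N else true.

Lemma omax_ole (b : nat) (o o' : option nat) :
  ole o b -> ole o' b -> ole (omax o o') b.
Proof. by case: o o' => [a|] [a'|] //= ha ha'; rewrite geq_max ha ha'. Qed.

Lemma omax_Some_ole (o : option nat) (b : nat) : ole o b -> omax (Some b) o = Some b.
Proof. by case: o => [a|] //= /maxn_idPl ->. Qed.

Lemma big_omax_Some_max (I : finType) (P : pred I) (F : I -> nat) (i0 : I) :
  P i0 -> (forall i, P i -> (F i <= F i0)%N) ->
  \big[omax/None]_(i | P i) Some (F i) = Some (F i0).
Proof.
move=> Pi0 F_le; rewrite (bigD1 i0) //; apply: omax_Some_ole.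
apply: (big_ind (ole^~ (F i0))) => //; first exact: omax_ole.
by move=> i /andP[/F_le]; rewrite /ole.
Qed.

Definition targets {T : finType} {m : nat} (g : {ffun 'I_m -> T}) : {set T} :=
  [set g j | j : 'I_m].

Section RoundOne.
Variables (n m : nat) (x : 'I_n -> nat) (B1 B2 : {set 'I_n}) (w : outcome n m).
Variable u : 'I_n.
Hypotheses (live_u : live B1 w u) (max_u : forall v, live B1 w v -> (x v <= x u)%N).

Lemma xstar_max : xstar x B1 w = Some (x u).
Proof. exact: big_omax_Some_max. Qed.

Lemma sigma1_ge_targets : (#|targets (w.2 u) :\: B2| <= sigma1 x B1 B2 w)%N.
Proof.
apply/subset_leq_card/fintype.subsetP => v; rewrite !inE xstar_max /=.
case/andP=> v_B2 /imsetP[j _ v_j].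
rewrite /Defs.val1 (@big_change_idx _ None omax) (@big_omax_Some_max _ _ x u).
- by apply/eqP/omax_Some_ole; rewrite /val0; case: ifP => // /max_u.
- by rewrite /reaches live_u v_B2; apply/existsP; exists j; rewrite v_j.
- by move=> v' /and3P[/max_u].
Qed.

End RoundOne.

Lemma sumr_indicator (R : pzSemiRingType) (T : finType) (P : pred T) :
  \sum_i (P i)%:R = #|P|%:R :> R.
Proof.
rewrite -natr_sum -sum1_card; congr _%:R; rewrite [RHS]big_mkcond.
by apply: eq_bigr => i _; rewrite unfold_in; case: (P i).
Qed.

Lemma natr_cardsC (R : pzSemiRingType) (T : finType) (A : {set T}) :
  #|A|%:R + #|~: A|%:R = #|T|%:R :> R.
Proof. by rewrite -natrD cardsC. Qed.

Lemma card_ffun_app (I J : finType) (u : I) (F : pred J) :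
  #|[pred g : {ffun I -> J} | F (g u)]| = (#|F| * #|J| ^ #|I|.-1)%N.
Proof.
have -> : #|[pred g : {ffun I -> J} | F (g u)]| =
          #|family (fun i => if i == u then F else predT : pred J)|.
  apply: eq_card => g; rewrite inE; apply/idP/familyP => [Fg i|/(_ u)].
    by case: eqP => [->|].
  by rewrite eqxx.
rewrite card_family foldrE big_map big_enum /= (bigD1 u) //= eqxx.
congr (_ * _)%N; rewrite (eq_bigr (fun=> #|J|)) => [|i /negPf ->]; last exact: eq_card.
by rewrite prod_nat_const cardC1.
Qed.

Section Uniform.
Context {R : realType}.

(* 0 when T is empty, since x / 0 = 0. *)
Definition unif {T : finType} (E : pred T) : R := #|E|%:R / #|T|%:R.

Lemma unif_ge0 (T : finType) (E : pred T) : 0 <= unif E.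
Proof. by rewrite /unif divr_ge0. Qed.

Lemma unif_le1 (T : finType) (E : pred T) : unif E <= 1.
Proof.
rewrite /unif; have [T0|T_gt0] := posnP #|T|; first by rewrite T0 invr0 mulr0.
by rewrite ler_pdivrMr ?ltr0n // mul1r ler_nat max_card.
Qed.

Lemma unifC (T : finType) (E : pred T) : (0 < #|T|)%N -> unif (predC E) = 1 - unif E.
Proof.
move=> T_gt0; have cardCE : #|predC E|%:R = #|T|%:R - #|E|%:R :> R.
  by rewrite -(fintype.cardC E) natrD addrC addKr.
by rewrite /unif cardCE mulrBl divff // pnatr_eq0 -lt0n.
Qed.

Lemma unif_le_app (I J : finType) (u : I) (E : pred {ffun I -> J}) (F : pred J) :
  (forall g, E g -> F (g u)) -> unif E <= unif F.
Proof.
move=> EF; have I_gt0 : (0 < #|I|)%N by apply/card_gt0P; exists u.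
rewrite /unif card_ffun; have [J0|J_gt0] := posnP #|J|.
  by rewrite J0 exp0n // !(invr0, mulr0).
apply: (@le_trans _ _ (#|[pred g : {ffun I -> J} | F (g u)]|%:R / (#|J| ^ #|I|)%:R)).
  rewrite ler_pM2r ?invr_gt0 ?ltr0n ?expn_gt0 ?J_gt0 // ler_nat.
  by apply/subset_leq_card/fintype.subsetP => g /EF.
rewrite card_ffun_app -(prednK I_gt0) expnS /= natrM mulnC natrM invfM.
by rewrite mulrA mulfK // pnatr_eq0 -lt0n expn_gt0 J_gt0.
Qed.

End Uniform.

Section ConsFfun.
Variable T : finType.

Definition ffun_cons {m : nat} (a : T) (g : {ffun 'I_m -> T}) : {ffun 'I_m.+1 -> T} :=
  [ffun i => if unlift ord0 i is Some j then g j else a].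

Lemma sum_ffunS (V : nmodType) m (F : {ffun 'I_m.+1 -> T} -> V) :
  \sum_f F f = \sum_(a : T) \sum_(g : {ffun 'I_m -> T}) F (ffun_cons a g).
Proof.
rewrite pair_big /= (reindex (fun ag : T * {ffun 'I_m -> T} => ffun_cons ag.1 ag.2)) //.
exists (fun f : {ffun 'I_m.+1 -> T} => (f ord0, [ffun j => f (lift ord0 j)])).
  move=> [a g] _ /=; congr pair; first by rewrite ffunE unlift_none.
  by apply/ffunP => j; rewrite !ffunE liftK.
move=> f _; apply/ffunP => i; rewrite ffunE.
by case: unliftP => [j ->|->]; rewrite ?ffunE.
Qed.

Lemma targets_cons m (a : T) (g : {ffun 'I_m -> T}) :
  targets (ffun_cons a g) = a |: targets g.
Proof.
apply/setP => v; rewrite !inE; apply/imsetP/predU1P => [[i _ ->]|[->|/imsetP[j _ ->]]].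
- by rewrite ffunE; case: unliftP => [j _|_]; [right; apply: imset_f | left].
- by exists ord0; rewrite ?ffunE ?unlift_none.
- by exists (lift ord0 j); rewrite ?ffunE ?liftK.
Qed.

End ConsFfun.

Lemma card_setU1D (T : finType) (a : T) (A S : {set T}) :
  #|(a |: A) :\: S| = ((a \notin S) + #|A :\: (a |: S)|)%N.
Proof.
have [aS|aNS] := boolP (a \in S).
  by apply: eq_card => v; rewrite !inE; case: eqP => [->|]; rewrite ?aS.
have -> : (a |: A) :\: S = a |: (A :\: (a |: S)).
  by apply/setP => v; rewrite !inE; case: eqP => [->|]; rewrite ?aNS.
by rewrite cardsU1 !inE eqxx.
Qed.

Section FreshTargets.
Variables (R : realType) (T : finType) (th : R).
Hypotheses (th_ge0 : 0 <= th) (th_le1 : th <= 1).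

Let K (k : nat) : R := th * #|T|%:R + (1 - th) * k%:R.

Let K_ge0 k : 0 <= K k.
Proof. by rewrite addr_ge0 ?mulr_ge0 ?subr_ge0. Qed.

Let K_le k k' : (k <= k')%N -> K k <= K k'.
Proof. by move=> kk'; rewrite lerD2l ler_wpM2l ?subr_ge0 ?ler_nat. Qed.

Lemma sum_expr_notin (S : {set T}) : \sum_(a : T) th ^+ (a \notin S) = K #|S|.
Proof.
rewrite (eq_bigr (fun a => th + (1 - th) * (a \in S)%:R)); last first.
  by move=> a _; case: (a \in S); rewrite ?mulr1 ?mulr0 ?addr0 // addrC subrK.
by rewrite big_split /= sumr_const -mulr_sumr sumr_indicator -[th *+ _]mulr_natr.
Qed.

(* Conditioning on the first target a: it is fresh (outside S) with weight
   th, and the remaining m targets are then counted outside a |: S. *)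
Lemma sum_expr_card_targets m (S : {set T}) :
  \sum_(g : {ffun 'I_m -> T}) th ^+ #|targets g :\: S| <= K (#|S| + m) ^+ m.
Proof.
elim: m S => [|m IH] S.
  rewrite expr0 (eq_bigr (fun=> 1)) => [|g _].
    by rewrite sumr_const card_ffun card_ord expn0.
  rewrite (_ : targets g :\: S = finset.set0) ?cards0 //.
  by apply/setP => v; rewrite !inE; apply/negP => /andP[_ /imsetP[[]]].
rewrite sum_ffunS exprS.
under eq_bigr => a _ do under eq_bigr => g _ do rewrite targets_cons card_setU1D exprD.
under eq_bigr => a _ do rewrite -mulr_sumr.
apply: (@le_trans _ _ (\sum_(a : T) th ^+ (a \notin S) * K (#|S| + m.+1) ^+ m)).
  apply: ler_sum => a _; rewrite ler_wpM2l ?exprn_ge0 //.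
  apply: le_trans (IH _) _; rewrite lerXn2r ?nnegrE ?K_le // cardsU1.
  by case: (a \notin S); rewrite ?addSn ?addnS.
by rewrite -mulr_suml sum_expr_notin ler_wpM2r ?exprn_ge0 ?K_le ?leq_addr.
Qed.

End FreshTargets.

Section Coins.
Variables (R : realType) (I : finType) (p : R).

Definition coin_weight (f : {ffun I -> bool}) : R :=
  \prod_i (if f i then p else 1 - p).

Lemma coin_weight_ge0 f : 0 <= p <= 1 -> 0 <= coin_weight f.
Proof.
by case/andP=> p_ge0 p_le1; apply: prodr_ge0 => i _; case: (f i); rewrite ?subr_ge0.
Qed.

Lemma sum_coin_weight_all_false (D : {set I}) :
  \sum_(f : {ffun I -> bool} | [forall i in D, ~~ f i]) coin_weight f = (1 - p) ^+ #|D|.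
Proof.
pose Q i b := (i \in D) ==> ~~ b.
rewrite (eq_bigl (mem (family Q))) => [|f]; last first.
  apply/forall_inP/familyP => [f_D i|f_Q i i_D]; first exact/implyP/f_D.
  by have := f_Q i; rewrite unfold_in i_D.
rewrite /coin_weight -(bigA_distr_big_dep _ (fun _ b => if b then p else 1 - p)).
rewrite -prodr_const [RHS]big_mkcond /=; apply: eq_bigr => i _.
by rewrite big_mkcond big_bool /Q; case: (i \in D); rewrite /= ?add0r // addrC subrK.
Qed.

Lemma sum_coin_weight : \sum_f coin_weight f = 1.
Proof.
rewrite -(expr0 (1 - p)) -(cards0 I) -sum_coin_weight_all_false.
by apply: eq_bigl => f; apply/esym/forall_inP => i; rewrite inE.
Qed.

End Coins.

Section RoundOneProbability.
Variables (R : realType) (n m : nat) (p : R).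

Local Notation choices := {ffun 'I_n -> {ffun 'I_m -> 'I_n}}.

Lemma weightE (w : outcome n m) : weight p w = coin_weight p w.1 / #|choices|%:R.
Proof. by rewrite /weight !card_ffun !card_ord -expnM mulnC natrX exprVn. Qed.

Lemma card_choices_gt0 : (0 < #|choices|)%N.
Proof. by apply/card_gt0P; exists [ffun i => [ffun=> i]]. Qed.

Lemma prob_cond (E : pred (outcome n m)) :
  prob p E = \sum_f coin_weight p f * unif (fun g => E (f, g)).
Proof.
have -> : prob p E = \sum_f \sum_(g | E (f, g)) weight p (f, g).
  by rewrite pair_big_dep; apply: eq_big => -[].
apply: eq_bigr => f _; rewrite (eq_bigr (fun=> coin_weight p f / #|choices|%:R)).
  by rewrite sumr_const /unif -[LHS]mulr_natr mulrAC mulrA.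
by move=> g _; rewrite weightE.
Qed.

Lemma probC (E : pred (outcome n m)) : prob p (predC E) = 1 - prob p E.
Proof.
rewrite !prob_cond -(sum_coin_weight 'I_n p) -sumrB; apply: eq_bigr => f _.
by rewrite (unifC (fun g => E (f, g)) card_choices_gt0) mulrBr mulr1.
Qed.

Lemma prob_le_cond (E : pred (outcome n m)) (C : pred {ffun 'I_n -> bool})
    (F : pred {ffun 'I_m -> 'I_n}) :
  0 <= p <= 1 -> (forall f, C f \/ exists u, forall g, E (f, g) -> F (g u)) ->
  prob p E <= \sum_(f | C f) coin_weight p f + unif F.
Proof.
move=> p01 EF; have -> : \sum_(f | C f) coin_weight p f + unif F =
    \sum_f coin_weight p f * ((C f)%:R + unif F).
  under [RHS]eq_bigr => f _ do rewrite mulrDr.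
  rewrite big_split -mulr_suml sum_coin_weight mul1r big_mkcond /=.
  by congr (_ + _); apply: eq_bigr => f _; case: (C f); rewrite ?mulr1 ?mulr0.
rewrite prob_cond; apply: ler_sum => f _; rewrite ler_wpM2l ?coin_weight_ge0 //.
have [Cf|[u EFu]] := EF f.
  by rewrite Cf (le_trans (unif_le1 _)) // lerDl unif_ge0.
by rewrite (le_trans (unif_le_app EFu)) // lerDr.
Qed.

End RoundOneProbability.

Lemma prob_not_spread (R : realType) n m (p L : R) (x : 'I_n -> nat)
    (B1 B2 : {set 'I_n}) : 0 <= p <= 1 ->
  prob p (predC (fun w : outcome n m =>
            (xstar x B1 w != None) && (L <= (sigma1 x B1 B2 w)%:R)))
  <= (1 - p) ^+ #|~: B1| + unif (fun g : {ffun 'I_m -> 'I_n} => #|targets g :\: B2|%:R < L).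
Proof.
move=> p01; rewrite -sum_coin_weight_all_false; apply: prob_le_cond => // f.
have [|/forall_inPn[u0 u0_B1 /negPn f_u0]] := boolP [forall i in ~: B1, ~~ f i].
  by left.
right; rewrite inE in u0_B1.
case: (@arg_maxnP _ u0 (fun i => f i && (i \notin B1)) x); first exact/andP.
move=> u live_u max_u; exists u => g /=.
rewrite (@xstar_max _ _ _ _ (f, g) u) //= -ltNge; apply: le_lt_trans.
by rewrite ler_nat (@sigma1_ge_targets _ _ _ _ _ (f, g)).
Qed.

Section Estimates.
Variable R : realType.

Lemma exprBx_le_expR (p : R) k : p <= 1 -> (1 - p) ^+ k <= expR (- (p * k%:R)).
Proof.
move=> p_le1; rewrite -mulNr expRM_natr lerXn2r ?nnegrE ?subr_ge0 ?expR_ge0 //.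
exact: expR_ge1Dx.
Qed.

Lemma expRN2_le : expR (-2 : R) <= 1 / 4.
Proof.
have e1 : 2 <= expR (1 : R) by have := expR_ge1Dx (1 : R); lra.
have e2 : 4 <= expR (2 : R) by rewrite -[2 : R]mulr1 expRM_natl expr2; nra.
have : expR (-2) * expR 2 = 1 :> R by rewrite -expRD addNr expR0.
have := expR_ge0 (-2 : R); nra.
Qed.

Lemma lt_indicator_le_expR (t L : R) k : 0 <= t ->
  ((k%:R < L)%R%:R : R) <= expR (t * L) * expR (- t) ^+ k.
Proof.
move=> t_ge0; have [lt|_] := ltrP; last by rewrite mulr_ge0 ?expR_ge0 ?exprn_ge0.
rewrite -expRM_natl -expRD mulr1n.
by have := expR_ge1Dx (t * L + k%:R * - t); nra.
Qed.

Lemma unif_few_targets_le (T : finType) m (S : {set T}) (L : R) :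
  (0 < #|T|)%N -> ((#|S| + m)%:R : R) <= #|T|%:R / 4 ->
  unif (fun g : {ffun 'I_m -> T} => #|targets g :\: S|%:R < L)
  <= expR (2 * L - m%:R / 2).
Proof.
move=> T_gt0 small_S; set th : R := expR (-2); set N : R := #|T|%:R.
have N_gt0 : 0 < N by rewrite ltr0n.
have th_ge0 : 0 <= th by exact: expR_ge0.
have th_le : th <= 1 / 4 := expRN2_le.
have K_le : th * N + (1 - th) * (#|S| + m)%:R <= N / 2.
  by have : 0 <= ((#|S| + m)%:R : R) by []; nra.
rewrite /unif card_ffun card_ord natrX -/N ler_pdivrMr ?exprn_gt0 // -sumr_indicator.
apply: (le_trans (ler_sum _ (fun g _ => lt_indicator_le_expR L _ (ler0n _ 2)))).
rewrite -mulr_sumr; apply: (le_trans (ler_wpM2l (expR_ge0 _) _)).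
  by apply: (sum_expr_card_targets th_ge0); lra.
have -> : expR (2 * L - m%:R / 2) = expR (2 * L) * expR (- 2^-1) ^+ m.
  by rewrite -expRM_natr -expRD; congr expR; lra.
rewrite -mulrA ler_wpM2l ?expR_ge0 // -exprMn.
rewrite lerXn2r ?nnegrE ?mulr_ge0 ?expR_ge0 ?(ltW N_gt0) //.
  by rewrite addr_ge0 ?mulr_ge0 // subr_ge0; lra.
apply: (le_trans K_le); rewrite mulrC ler_wpM2r ?(ltW N_gt0) //.
by have := expR_ge1Dx (- 2^-1 : R); lra.
Qed.

End Estimates.

Section Constants.
Variable R : realType.

Lemma ln_le_2sqrt (x : R) : 0 < x -> ln x <= 2 * Num.sqrt x.
Proof.
move=> x_gt0; set s := Num.sqrt x.
have s_gt0 : 0 < s by rewrite sqrtr_gt0.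
have ln_s : ln s <= s - 1.
  by have := @le_ln1Dx R (s - 1); rewrite [1 + _]addrC subrK; apply; lra.
by rewrite -(sqr_sqrtr (ltW x_gt0)) -/s lnXn // mulr2n; lra.
Qed.

Lemma large_n_bounds n : (500 * 500 <= n)%N ->
  (2 : R) <= n%:R /\ 10 * ln (n%:R : R) + 1 <= n%:R / 10.
Proof.
rewrite -(ler_nat R) natrM => n_large; set N : R := n%:R in n_large *.
have N_gt0 : 0 < N by nra.
have := sqr_sqrtr (ltW N_gt0); have := sqrtr_ge0 N; have := ln_le_2sqrt N_gt0.
set s := Num.sqrt N; rewrite expr2 => ln_le s_ge0 sqr_s.
have s_ge : 500 <= s by nra.
split; nra.
Qed.

Lemma fanout_bounds (c2 : R) n : 0 <= c2 * ln n%:R ->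
  c2 * ln n%:R <= (fanout c2 n)%:R <= c2 * ln n%:R + 1.
Proof.
move=> ge0; rewrite /fanout natr_absz ger0_norm ?ceil_ge0; last by lra.
have /andP[lt le] := ceil_itv (c2 * ln n%:R); rewrite intrB in lt.
by apply/andP; split; lra.
Qed.

Lemma p_act_itv (c1 : R) n : 0 <= c1 * ln n%:R -> 0 <= p_act c1 n <= 1.
Proof. by move=> ge0; rewrite le_min ge_min lexx ler01 divr_ge0. Qed.

Lemma expRN_mul_ln (k : nat) (x : R) : 0 < x -> expR (- (k%:R * ln x)) = x^-1 ^+ k.
Proof. by move=> x_gt0; rewrite -mulrN expRM_natl expRN lnK. Qed.

End Constants.

Section FailureBounds.
Variable R : realType.

Lemma no_live_bound n (B1 : {set 'I_n}) :
  (2 : R) <= n%:R -> 10 * ln (n%:R : R) + 1 <= n%:R / 10 -> (#|B1|%:R : R) <= n%:R / 10 ->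
  (1 - p_act (4 : R) n) ^+ #|~: B1| <= n%:R^-1 ^+ 3.
Proof.
have := natr_cardsC R B1; rewrite /p_act card_ord; set N : R := n%:R; set L := ln N.
move=> card_B1C N_ge2 L_small B1_small; have L_ge0 : 0 <= L by rewrite ln_ge0 //; lra.
rewrite -expRN_mul_ln; last lra.
rewrite (le_trans (exprBx_le_expR _ _)) ?ge_min ?lexx // ler_expR lerN2 -/L.
case: (leP 1 (4 * L / N)) => [_|_]; first by nra.
have : 4 * L / N * N = 4 * L by rewrite divfK // gt_eqF; lra.
have : 0 <= 4 * L / N by rewrite divr_ge0 //; lra.
nra.
Qed.

Lemma few_targets_bound n (B2 : {set 'I_n}) :
  (2 : R) <= n%:R -> 10 * ln (n%:R : R) + 1 <= n%:R / 10 -> (#|B2|%:R : R) <= n%:R / 10 ->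
  unif (fun g : {ffun 'I_(fanout (10 : R) n) -> 'I_n} => #|targets g :\: B2|%:R < ln (n%:R : R))
  <= (n%:R : R)^-1 ^+ 3.
Proof.
move=> N_ge2 L_small B2_small; have L_ge0 : 0 <= ln (n%:R : R) by rewrite ln_ge0 //; lra.
have /andP[m_ge m_le] := fanout_bounds (mulr_ge0 (ler0n R 10) L_ge0).
rewrite -expRN_mul_ln; last lra.
rewrite (le_trans (unif_few_targets_le _ _ _)) ?card_ord //.
- by rewrite -(ltr0n R); lra.
- by rewrite natrD; lra.
- by rewrite ler_expR; lra.
Qed.

End FailureBounds.

Theorem lemma12 (R : realType) (eps : R) :
  eps <= 1 / 10 ->
  exists c1 c2 c3 : R, [/\ 0 < c1, 0 < c2 & 0 < c3] /\
  exists (c delta : R) (n0 : nat), 0 < c /\ 0 < delta /\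
  forall n : nat, (n0 <= n)%N ->
  forall (x : 'I_n -> nat) (B1 B2 : {set 'I_n}),
    #|B1|%:R <= eps * n%:R -> #|B2|%:R <= eps * n%:R ->
    1 - powR (n%:R) (- delta) <=
    prob (p_act c1 n)
      (fun w : outcome n (fanout c2 n) =>
         (xstar x B1 w != None) && (c * ln (n%:R) <= (sigma1 x B1 B2 w)%:R)).
Proof.
move=> eps_le; exists 4, 10, 1; split=> //; exists 1, 1, (500 * 500)%N.
do 2!split=> //; move=> n n_large x B1 B2 B1_small B2_small.
have [n_ge2 ln_small] := large_n_bounds R n_large.
have small (A : {set 'I_n}) : #|A|%:R <= eps * n%:R -> (#|A|%:R : R) <= n%:R / 10.
  by move=> A_small; apply: (le_trans A_small); nra.
have p01 : 0 <= p_act (4 : R) n <= 1.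
  by apply: p_act_itv; rewrite mulr_ge0 // ln_ge0 //; lra.
have := prob_not_spread (fanout (10 : R) n) (ln n%:R) x B1 B2 p01.
rewrite probC mul1r powR_inv1; last lra.
have := no_live_bound n_ge2 ln_small (small _ B1_small).
have := few_targets_bound n_ge2 ln_small (small _ B2_small).
have : (n%:R^-1 : R) <= 1 / 2 by rewrite -div1r ler_pdivrMr; nra.
have : 0 <= (n%:R^-1 : R) by rewrite invr_ge0.
rewrite !exprS expr0 !mulr1; nra.
Qed.
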